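(* Let $\mathcal{D} = \{(1,2),(3,2),(3,4),(5,4),(5,1)\}$ and $\epsilon\ge 0$. Let $\mu$ be a probability measure on a measurable space $\Lambda$ of hidden variables. Suppose that for each $h\in\Lambda$ we are given numbers $p_i(h)\in[0,1]$ for $i\in\{1,\dots,5\}$ and $q_{(i,j)}(h)\in[0,1]$ for $(i,j)\in\mathcal{D}$, measurable in $h$, with the following interpretation: $p_i(h)=\Pr(A_i=1\mid \#1=i,h)$ is the probability that measurement $i$, when performed first, yields outcome $+1$, and $q_{(i,j)}(h)=\Pr(A_j=1\mid \#1=i,\#2=j,h)$ is the probability that measurement $j$, performed second after $i$, yields $+1$ (outcomes are $\pm1$). Assume sequentiality: for each $h$ and $(i,j)\in\mathcal{D}$, $\Pr(A_i=a_i,A_j=a_j\mid \#1=i,\#2=j,h)=\Pr(A_i=a_i\mid\#1=i,h)\Pr(A_j=a_j\mid\#1=i,\#2=j,h)$. Assume bounded incompatibility: there are measurable $\epsilon_{(i,j),h}\in[0,1]$ with $|\Pr(A_j=a\mid \#1=j,h)-\Pr(A_j=a\mid\#1=i,\#2=j,h)|\le \epsilon_{(i,j),h}$ for all $h$, $(i,j)\in\mathcal{D}$, $a\in\{\pm1\}$, and $\frac15\int \mathrm{d}\mu(h)\sum_{(i,j)\in\mathcal{D}}\epsilon_{(i,j),h}\le\epsilon$. Consider the game in which an ordered context $(i,j)\in\mathcal{D}$ is selected uniformly at random (probability $1/5$ each, independently of $h$), $i$ is measured first and $j$ second, and the game is won iff the two outcomes differ. Then the winning probability $$\beta_{\mathrm{win}}=\frac15\int\mathrm{d}\mu(h)\sum_{(i,j)\in\mathcal{D}}\sum_{a\in\{-1,1\}}\Pr(A_i=a,A_j=-a\mid\#1=i,\#2=j,h)$$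 satisfies $\beta_{\mathrm{win}}\le \frac45+\epsilon$.
   Context: This is the single-trial winning probability of an $\epsilon$-bounded noncontextual hidden variable model in the KCBS win/lose game (five $\pm1$-valued measurements arranged in a pentagon, ordered contexts in $\mathcal{D}$). $\Pr(A_j=a\mid\#1=j,h)$ denotes the probability of outcome $a$ when $j$ is measured first (so $\Pr(A_j=1\mid\#1=j,h)=p_j(h)$). *)

From HB Require Import structures.
From mathcomp Require Import all_boot all_order all_algebra.
From mathcomp Require Import all_classical all_reals all_analysis.
Set Implicit Arguments. Unset Strict Implicit. Unset Printing Implicit Defensive.
Import Order.TTheory GRing.Theory Num.Theory.
Local Open Scope ring_scope.

(* Measurements 1..5 are represented by 'I_5 with value k-1 (0-indexed).
   Outcomes +1 / -1 are represented by true / false. *)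

Definition ctxD : seq ('I_5 * 'I_5) :=
  [:: (inord 0, inord 1); (inord 2, inord 1); (inord 2, inord 3);
      (inord 4, inord 3); (inord 4, inord 0)].

Definition prob_of {R : ringType} (p : R) (a : bool) : R :=
  if a then p else 1 - p.

From HB Require Import structures.
From mathcomp Require Import all_boot all_order all_algebra.
From mathcomp Require Import all_classical all_reals all_analysis.
From mathcomp Require Import measurable_realfun lra ring.
Import Order.TTheory GRing.Theory Num.Theory.
Local Open Scope ring_scope.

(* For each hidden variable h, the game played in context (i,j) is won with
   probability [disagree (p i h) (q (i,j) h)].  Bounded incompatibility lets us
   replace [q (i,j) h] by [p j h] at cost [e (i,j) h], and the resulting sum
   [disagree] over the edges of the pentagon is at most 4: [disagree] is a
   metric on [0,1] in which every triangle has perimeter at most 2, so an odd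
   cycle (here of length 5) cannot have all of its edges of length 1.
   Averaging over the five contexts and integrating gives 4/5 + eps. *)

Section Disagreement.
Context {R : realFieldType}.
Implicit Types x y z : R.

(* The probability that two independent bits, equal to 1 with probabilities
   x and y, differ. *)
Definition disagree x y := x * (1 - y) + (1 - x) * y.

Lemma disagreeC x y : disagree x y = disagree y x.
Proof. by rewrite /disagree; ring. Qed.

Lemma disagree_ge0 x y : 0 <= x <= 1 -> 0 <= y <= 1 -> 0 <= disagree x y.
Proof. by move=> /andP[? ?] /andP[? ?]; rewrite /disagree; nra. Qed.

Lemma disagree_lipschitz x y z : 0 <= x <= 1 ->
  disagree x y <= disagree x z + `|y - z|.
Proof.
move=> /andP[? ?]; rewrite /disagree.
have -> : x * (1 - y) + (1 - x) * y
  = x * (1 - z) + (1 - x) * z + (1 - 2 * x) * (y - z) by ring.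
rewrite lerD2l; apply: le_trans (ler_norm _) _.
by rewrite normrM ler_piMl // ler_norml; apply/andP; split; lra.
Qed.

Lemma disagree_triangle {x y z} : 0 <= x <= 1 -> 0 <= y <= 1 -> 0 <= z <= 1 ->
  disagree x z <= disagree x y + disagree y z.
Proof.
move=> /andP[? ?] /andP[? ?] /andP[? ?].
have -> : disagree x y + disagree y z
  = disagree x z + 2 * (y * ((1 - x) * (1 - z)) + (1 - y) * (x * z)).
  by rewrite /disagree; ring.
by rewrite lerDl mulr_ge0 // addr_ge0 // !mulr_ge0 // subr_ge0.
Qed.

Lemma disagree_perimeter_le2 {x y z} :
  0 <= x <= 1 -> 0 <= y <= 1 -> 0 <= z <= 1 ->
  disagree x y + disagree y z + disagree z x <= 2.
Proof.
move=> /andP[? ?] /andP[? ?] /andP[? ?].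
have -> : disagree x y + disagree y z + disagree z x
  = 2 - 2 * ((1 - x) * ((1 - y) * (1 - z)) + x * (y * z)).
  by rewrite /disagree; ring.
by rewrite gerBl mulr_ge0 // addr_ge0 // !mulr_ge0 // subr_ge0.
Qed.

Lemma disagree_pentagon_le4 {a b c d e : R} :
  0 <= a <= 1 -> 0 <= b <= 1 -> 0 <= c <= 1 -> 0 <= d <= 1 -> 0 <= e <= 1 ->
  disagree a b + disagree c b + disagree c d + disagree e d + disagree e a <= 4.
Proof.
move=> ha hb hc hd he; rewrite (disagreeC c b) (disagreeC e d).
have := disagree_perimeter_le2 ha hb hc.
have := disagree_perimeter_le2 hc hd he.
have := disagree_triangle he hc ha.
lra.
Qed.

Lemma ctxD_disagree_le4 (x : 'I_5 -> R) : (forall i, 0 <= x i <= 1) ->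
  \sum_(c <- ctxD) disagree (x c.1) (x c.2) <= 4.
Proof.
move=> x01; rewrite /ctxD !big_cons big_nil /= addr0.
have := disagree_pentagon_le4 (x01 (inord 0)) (x01 (inord 1)) (x01 (inord 2))
  (x01 (inord 3)) (x01 (inord 4)).
lra.
Qed.

Lemma ctxD_disagree_le4D (x : 'I_5 -> R) (y err : 'I_5 * 'I_5 -> R) :
  (forall i, 0 <= x i <= 1) -> (forall c, c \in ctxD -> `|x c.2 - y c| <= err c) ->
  \sum_(c <- ctxD) disagree (x c.1) (y c) <= 4 + \sum_(c <- ctxD) err c.
Proof.
move=> x01 yx.
apply: (@le_trans _ _ (\sum_(c <- ctxD) (disagree (x c.1) (x c.2) + err c))).
  rewrite big_seq_cond [leRHS]big_seq_cond; apply: ler_sum => c /andP[cD _].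
  apply: le_trans (disagree_lipschitz _ (y c) (x c.2) (x01 _)) _.
  by rewrite lerD2l distrC yx.
by rewrite big_split lerD2r ctxD_disagree_le4.
Qed.

Lemma sum_prob_of_neq x y :
  \sum_(a : bool) prob_of x a * prob_of y (~~ a) = disagree x y.
Proof. by rewrite big_bool. Qed.

End Disagreement.

Section Integration.
Context {d} {T : measurableType d} {R : realType}.

Lemma measurable_sum_seq {I : eqType} {s : seq I} {f : I -> T -> R} :
  (forall i, i \in s -> measurable_fun setT (f i)) ->
  measurable_fun setT (fun x => \sum_(i <- s) f i x).
Proof.
elim: s => [_|i s IHs mf].
  by under eq_fun do rewrite big_nil; exact: measurable_cst.
under eq_fun do rewrite big_cons.
by apply: measurable_funD; [apply: mf; rewrite mem_head|
  apply: IHs => j js; apply: mf; rewrite inE js orbT].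
Qed.

Lemma integral_le_cstD (mu : probability T R) {f g : T -> R} {M : R} :
  0 <= M -> measurable_fun setT f -> measurable_fun setT g ->
  (forall x, 0 <= f x) -> (forall x, 0 <= g x) -> (forall x, f x <= M + g x) ->
  (\int[mu]_x (f x)%:E <= M%:E + \int[mu]_x (g x)%:E)%E.
Proof.
move=> M0 mf mg f0 g0 fMg.
have -> : (M%:E + \int[mu]_x (g x)%:E = \int[mu]_x (M%:E + (g x)%:E))%E.
  rewrite ge0_integralD //; last 2 first.
  - by move=> x _; rewrite lee_fin.
  - exact/measurable_EFinP.
  by rewrite -[X in (_ = X + _)%E]/(\int[mu]_x (cst M%:E) x)%E integral_cst //=
    probability_setT mule1.
apply: ge0_le_integral => //.
- by move=> x _; rewrite lee_fin.
- exact/measurable_EFinP.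
- by apply: emeasurable_funD; [exact: measurable_cst|exact/measurable_EFinP].
- by move=> x _; rewrite -EFinD lee_fin.
Qed.

End Integration.

Theorem mainTheorem1 (R : realType) (d : measure_display) (Lambda : measurableType d)
  (mu : probability Lambda R) (eps : R)
  (* p i h = Pr(A_i = +1 | #1 = i, h) *)
  (p : 'I_5 -> Lambda -> R)
  (* q (i,j) h = Pr(A_j = +1 | #1 = i, #2 = j, h) *)
  (q : 'I_5 * 'I_5 -> Lambda -> R)
  (* J (i,j) a b h = Pr(A_i = a, A_j = b | #1 = i, #2 = j, h) *)
  (J : 'I_5 * 'I_5 -> bool -> bool -> Lambda -> R)
  (* epsilon_{(i,j),h} *)
  (e : 'I_5 * 'I_5 -> Lambda -> R) :
  0 <= eps ->
  (forall i h, 0 <= p i h <= 1) ->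
  (forall c h, c \in ctxD -> 0 <= q c h <= 1) ->
  (forall i, measurable_fun setT (p i)) ->
  (forall c, c \in ctxD -> measurable_fun setT (q c)) ->
  (* sequentiality *)
  (forall c h a b, c \in ctxD ->
     J c a b h = prob_of (p c.1 h) a * prob_of (q c h) b) ->
  (* bounded incompatibility *)
  (forall c h, c \in ctxD -> 0 <= e c h <= 1) ->
  (forall c, c \in ctxD -> measurable_fun setT (e c)) ->
  (forall c h a, c \in ctxD ->
     `| prob_of (p c.2 h) a - prob_of (q c h) a | <= e c h) ->
  ((1 / 5)%:E * \int[mu]_h (\sum_(c <- ctxD) e c h)%:E <= eps%:E)%E ->
  ((1 / 5)%:E * \int[mu]_h (\sum_(c <- ctxD) \sum_(a : bool) J c a (~~ a) h)%:E
     <= (4 / 5 + eps)%:E)%E.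
Proof.
move=> _ p01 q01 mp mq hJ e01 me hinc hint.
set W := fun h => \sum_(c <- ctxD) disagree (p c.1 h) (q c h).
have -> : (\int[mu]_h (\sum_(c <- ctxD) \sum_(a : bool) J c a (~~ a) h)%:E
    = \int[mu]_h (W h)%:E)%E.
  apply: eq_integral => h _; congr EFin.
  rewrite big_seq_cond [RHS]big_seq_cond; apply: eq_bigr => c /andP[cD _].
  by under eq_bigr do rewrite hJ //; exact: sum_prob_of_neq.
have W_le h : W h <= 4 + \sum_(c <- ctxD) e c h.
  apply: (ctxD_disagree_le4D (fun i => p i h) (fun c => q c h)) => // c cD.
  exact: (hinc c h true cD).
have mW : measurable_fun setT W.
  apply: measurable_sum_seq => c cD; rewrite /disagree.
  have mqc := mq c cD.
  by apply: measurable_funD; apply: measurable_funM => //; apply: measurable_funB.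
have W_ge0 h : 0 <= W h.
  by rewrite /W big_seq; apply: sumr_ge0 => c cD; apply: disagree_ge0; [exact: p01|exact: q01].
have e_ge0 h : 0 <= \sum_(c <- ctxD) e c h.
  by rewrite big_seq; apply: sumr_ge0 => c cD; case/andP: (e01 c h cD).
have le_int := integral_le_cstD mu (ler0n _ 4) mW (measurable_sum_seq me) W_ge0 e_ge0 W_le.
apply: le_trans (lee_wpmul2l _ le_int) _; first by rewrite lee_fin.
rewrite ge0_muleDr ?lee_fin ?integral_ge0 //; last by move=> h _; rewrite lee_fin.
rewrite -EFinM EFinD leeD // lee_fin; lra.
Qed.
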